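(* Let $\mathcal M=(a_{i,j})_{i,j\in[n]}$ be a real matrix with $0\le a_{i,j}\le 1$ for all $i,j\in[n]$ such that each row sum $s_i=\sum_{j\in[n]}a_{i,j}$ and each column sum $t_j=\sum_{i\in[n]}a_{i,j}$ is a (nonnegative) integer. Let $X=\sum_{i\in[n]}s_i$. Then there exists a matrix $\mathcal N=(b_{i,j})_{i,j\in[n]}$ with $b_{i,j}\in\{0,1\}$ for all $i,j$, $\sum_{j\in[n]}b_{i,j}=s_i$ for all $i\in[n]$, $\sum_{i\in[n]}b_{i,j}=t_j$ for all $j\in[n]$, and $$\sum_{i\in[n]}\sum_{j\in[n]}a_{i,j}\,b_{i,j}\ \ge\ \frac{X^2}{n^2}.$$
   Context: $[n]=\{1,\dots,n\}$ for a positive integer $n$. *)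

From mathcomp Require Import all_boot all_order all_algebra.
From mathcomp Require Import reals.

From mathcomp Require Import all_boot all_order all_algebra.
From mathcomp Require Import reals.
From mathcomp Require Import zify ring lra.
Import Order.TTheory GRing.Theory Num.Theory.
Local Open Scope ring_scope.

(* Among the matrices with entries in [0, 1] and the row and column sums of A,
   the linear functional C |-> sum a_ij c_ij has a 0/1 maximiser.  Indeed, if C
   has fractional entries, then every row and column through one of them
   contains a second one, so there are at most as many such lines as
   fractional cells; counting dimensions gives a nonzero direction E supported
   on the fractional cells with zero row and column sums.  Moving from C along
   E or -E, whichever does not decrease the functional, until an entry reaches
   0 or 1 strictly shrinks the set of fractional cells.  Starting from C = A,
   the resulting 0/1 matrix B satisfies sum a_ij b_ij >= sum a_ij^2, which is
   at least X^2/n^2 by Cauchy-Schwarz. *)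

Lemma sqr_sum_le_card_sum_sqr {R : realDomainType} {T : finType} (f : T -> R) :
  (\sum_t f t) ^+ 2 <= #|T|%:R * \sum_t f t ^+ 2.
Proof.
have amgm t u : f t * f u *+ 2 <= f t ^+ 2 + f u ^+ 2.
  by rewrite -subr_ge0 (_ : _ - _ = (f t - f u) ^+ 2) ?sqr_ge0 //; ring.
have sum_const_sqr : \sum_(u : T) \sum_t f t ^+ 2 = #|T|%:R * \sum_t f t ^+ 2.
  by rewrite sumr_const mulr_natl cardE.
have : (\sum_t f t) ^+ 2 *+ 2 <=
         \sum_t \sum_(u : T) f t ^+ 2 + \sum_(t : T) \sum_u f u ^+ 2.
  rewrite expr2 mulr_suml -sumrMnl -big_split; apply: ler_sum => t _.
  by rewrite mulr_sumr -sumrMnl -big_split; apply: ler_sum => u _.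
rewrite [X in _ + X]sum_const_sqr exchange_big sum_const_sqr !mulr2n; lra.
Qed.

Lemma double_card_imset_le {T I : finType} {F : {set T}} {p : T -> I} :
  (forall c, c \in F -> exists2 d, d \in F & (d != c) && (p d == p c)) ->
  (2 * #|p @: F| <= #|F|)%N.
Proof.
move=> twin.
rewrite -[#|F|]sum1_card (partition_big p (mem (p @: F))) /=; last first.
  by move=> c cF; apply: imset_f.
rewrite mulnC -sum_nat_const; apply: leq_sum => _ /imsetP[c cF ->].
have [d dF /andP[dc pd]] := twin c cF.
rewrite (bigD1 c) /=; last by rewrite cF eqxx.
by rewrite (bigD1 d) /= ?dF ?pd ?dc //; lia.
Qed.

Lemma fractional_not_alone {R : realDomainType} {I : finType} {x : I -> R} {k : I} :
  (forall l, 0 <= x l <= 1) -> (exists m : nat, \sum_l x l = m%:R) ->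
  0 < x k < 1 -> exists2 l, l != k & 0 < x l < 1.
Proof.
move=> x01 [m sum_x] /andP[xk0 xk1].
have [l /andP[lk xl] | no_other] := pickP [pred l | (l != k) && (0 < x l < 1)].
  by exists l.
have others01 l : l != k -> x l = 0 \/ x l = 1.
  move=> lk; have := no_other l; rewrite /= lk /= => /negbT.
  have := x01 l; rewrite negb_and -!leNgt => /andP[? ?] /orP[?|?]; [left|right]; lra.
have [m' sum_others] : exists m' : nat, \sum_(l | l != k) x l = m'%:R.
  apply: (big_ind (fun y => exists m' : nat, y = m'%:R)) => [|_ _ [a ->] [b ->]|l /others01[]->].
  - by exists 0%N.
  - by exists (a + b)%N; rewrite natrD.
  - by exists 0%N.
  - by exists 1%N.
move: sum_x; rewrite (bigD1 k) //= sum_others => sum_x.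
case: (leqP m m') => [mm'|m'm].
  by have := ler_nat R m m'; rewrite mm'; lra.
have := ler_nat R m'.+1 m; rewrite m'm -addn1 natrD; lra.
Qed.

Lemma exists_nontrivial_solution {F : fieldType} {S T : finType} (a : S -> T -> F) :
  (#|S| < #|T|)%N ->
  exists2 x : T -> F, (exists t, x t != 0) & forall s, \sum_t a s t * x t = 0.
Proof.
move=> ltST.
pose M : 'M[F]_(#|T|, #|S|) := \matrix_(k, l) a (enum_val l) (enum_val k).
have /rowV0Pn[v /sub_kermxP vM /matrix0Pn[i [k vik]]] : kermx M != 0.
  by rewrite -mxrank_eq0 mxrank_ker; have := rank_leq_col M; lia.
exists (fun t => v 0 (enum_rank t)).
  by exists (enum_val k); rewrite enum_valK -(ord1 i).
move=> s; transitivity ((v *m M) 0 (enum_rank s)); last by rewrite vM mxE.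
rewrite mxE (reindex (@enum_val T predT)) /=; last first.
  by exists enum_rank => t _; [exact: enum_valK | exact: enum_rankK].
by apply: eq_bigr => l _; rewrite enum_valK mxE enum_rankK mulrC.
Qed.

Lemma sum_indicator_mul (R : nzSemiRingType) (T : finType) (P : pred T) (x : T -> R) :
  \sum_t (P t)%:R * x t = \sum_(t | P t) x t.
Proof. by rewrite [RHS]big_mkcond; apply: eq_bigr => t _; rewrite mulr_natl mulrb. Qed.

Section Rounding.
Context {R : realFieldType} {m n : nat}.
Implicit Types (C D E W : 'M[R]_(m, n)) (x : 'I_m * 'I_n -> R).

Definition frac_cells C : {set 'I_m * 'I_n} := [set c | 0 < C c.1 c.2 < 1].
Definition unit_entries C := forall i j, 0 <= C i j <= 1.
Definition integral_margins C :=
  (forall i, exists k : nat, \sum_j C i j = k%:R) /\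
  (forall j, exists k : nat, \sum_i C i j = k%:R).
Definition same_margins C D :=
  (forall i, \sum_j C i j = \sum_j D i j) /\ (forall j, \sum_i C i j = \sum_i D i j).
Definition zero_margins E := (forall i, \sum_j E i j = 0) /\ (forall j, \sum_i E i j = 0).
Definition mxdot W C := \sum_i \sum_j W i j * C i j.

Lemma mxdotD W C D : mxdot W (C + D) = mxdot W C + mxdot W D.
Proof.
rewrite /mxdot -big_split; apply: eq_bigr => i _.
by rewrite -big_split; apply: eq_bigr => j _; rewrite mxE mulrDr.
Qed.

Lemma mxdotZ W a C : mxdot W (a *: C) = a * mxdot W C.
Proof.
rewrite /mxdot mulr_sumr; apply: eq_bigr => i _.
by rewrite mulr_sumr; apply: eq_bigr => j _; rewrite mxE mulrCA.
Qed.

Lemma zero_marginsZ a {E} : zero_margins E -> zero_margins (a *: E).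
Proof.
case=> Erow Ecol; split=> [i|j].
  by under eq_bigr do rewrite mxE; rewrite -mulr_sumr Erow mulr0.
by under eq_bigr do rewrite mxE; rewrite -mulr_sumr Ecol mulr0.
Qed.

Lemma same_margins_addl C {E} : zero_margins E -> same_margins (C + E) C.
Proof.
case=> Erow Ecol; split=> [i|j].
  by under eq_bigr do rewrite mxE; rewrite big_split /= Erow addr0.
by under eq_bigr do rewrite mxE; rewrite big_split /= Ecol addr0.
Qed.

Lemma same_margins_integral {C D} : same_margins C D -> integral_margins D -> integral_margins C.
Proof. by case=> rowCD colCD [rowD colD]; split=> [i|j]; rewrite ?rowCD ?colCD. Qed.

Lemma sum_row_cells x i : \sum_(t | t.1 == i) x t = \sum_j x (i, j).
Proof.
transitivity (\sum_(i' | i' == i) \sum_j x (i', j)); last by rewrite big_pred1_eq.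
by rewrite pair_big_dep; apply: eq_big => [[? ?]|[? ?] _]; rewrite ?andbT.
Qed.

Lemma sum_col_cells x j : \sum_(t | t.2 == j) x t = \sum_i x (i, j).
Proof.
transitivity (\sum_i \sum_(j' | j' == j) x (i, j')); last first.
  by apply: eq_bigr => i _; rewrite big_pred1_eq.
by rewrite pair_big_dep; apply: eq_big => [[? ?]|[? ?] _].
Qed.

Lemma frac_cells0_01 {C} : unit_entries C -> frac_cells C = set0 ->
  forall i j, C i j = 0 \/ C i j = 1.
Proof.
move=> C01 frac0 i j; have /andP[C0 C1] := C01 i j.
have : (i, j) \notin frac_cells C by rewrite frac0 inE.
by rewrite inE negb_and -!leNgt => /orP[?|?]; [left|right]; lra.
Qed.

Lemma card_frac_lines {C} : unit_entries C -> integral_margins C ->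
  (#|[set c.1 | c in frac_cells C]| + #|[set c.2 | c in frac_cells C]|
     <= #|frac_cells C|)%N.
Proof.
move=> C01 [Crow Ccol].
have row_twin : forall c, c \in frac_cells C ->
    exists2 d, d \in frac_cells C & (d != c) && (d.1 == c.1).
  move=> [i j]; rewrite inE /= => Cij.
  have [j' j'j Cij'] := fractional_not_alone (C01 i) (Crow i) Cij.
  by exists (i, j'); rewrite ?inE //= eqxx andbT xpair_eqE negb_and j'j orbT.
have col_twin : forall c, c \in frac_cells C ->
    exists2 d, d \in frac_cells C & (d != c) && (d.2 == c.2).
  move=> [i j]; rewrite inE /= => Cij.
  have [i' i'i Ci'j] := fractional_not_alone (C01^~ j) (Ccol j) Cij.
  by exists (i', j); rewrite ?inE //= eqxx andbT xpair_eqE negb_and i'i.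
have := double_card_imset_le row_twin.
have := double_card_imset_le col_twin.
by set cols := #|_ @: _|; set rows := #|_ @: _|; lia.
Qed.

Lemma exists_frac_direction {C} : unit_entries C -> integral_margins C ->
  frac_cells C != set0 ->
  exists2 E, E != 0 & zero_margins E /\ forall i j, E i j != 0 -> (i, j) \in frac_cells C.
Proof.
move=> C01 Cint /set0Pn[c0 c0F].
set F := frac_cells C; set rows := [set c.1 | c in F]; set cols := [set c.2 | c in F].
pose j0 := c0.2.
have j0_col : j0 \in cols by apply: imset_f.
(* Equations: E vanishes off F, every row of F and
   every column of F but [j0] sums to 0; the column sum at [j0] then follows
   from the total sum, and dropping it makes the system underdetermined. *)
pose S : finType := ({c | c \in ~: F} + ({i | i \in rows} + {j | j \in cols :\ j0}))%type.
pose eqn (s : S) : pred ('I_m * 'I_n) := match s with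
  | inl c => pred1 (val c)
  | inr (inl i) => fun t => t.1 == val i
  | inr (inr j) => fun t => t.2 == val j
  end.
have card_S : (#|S| < #|{: 'I_m * 'I_n}|)%N.
  have := card_frac_lines C01 Cint; have := cardsC F; have := cardsD1 j0 cols.
  have card_in (T : finType) (A : {set T}) : #|[pred x in A]| = #|A| by apply: eq_card.
  rewrite !card_sum !card_sig !card_in j0_col -/F -/rows -/cols /=.
  by set ntot := #|{: _}|; set ncols := #|_|; lia.
have [x [t xt] Ex0] := exists_nontrivial_solution (fun s t => (eqn s t)%:R : R) card_S.
have x_off c : c \in ~: F -> x c = 0.
  by move=> cF; have := Ex0 (inl (exist _ c cF)); rewrite sum_indicator_mul big_pred1_eq.
have x_row i : \sum_j x (i, j) = 0.
  have [i_row|i_row] := boolP (i \in rows).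
    by have := Ex0 (inr (inl (exist _ i i_row))); rewrite sum_indicator_mul sum_row_cells.
  apply: big1 => j _; apply: x_off; rewrite in_setC.
  by apply: contra i_row => ijF; apply/imsetP; exists (i, j).
have x_col j : j != j0 -> \sum_i x (i, j) = 0.
  move=> jj0; have [j_col|j_col] := boolP (j \in cols :\ j0).
    by have := Ex0 (inr (inr (exist _ j j_col))); rewrite sum_indicator_mul sum_col_cells.
  apply: big1 => i _; apply: x_off; rewrite in_setC.
  by apply: contra j_col => ijF; rewrite in_setD1 jj0; apply/imsetP; exists (i, j).
exists (\matrix_(i, j) x (i, j)).
  by apply: contraNneq xt => /matrixP/(_ t.1 t.2); rewrite !mxE -surjective_pairing => ->.
split; [split=> [i|j] | move=> i j]; rewrite ?mxE.
- by under eq_bigr do rewrite mxE; exact: x_row.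
- under eq_bigr do rewrite mxE.
  have [->|] := eqVneq j j0; last exact: x_col.
  have : \sum_j \sum_i x (i, j) = 0 by rewrite exchange_big big1.
  by rewrite (bigD1 j0) //= [X in _ + X]big1 ?addr0 // => j'; apply: x_col.
- by move=> xij; apply: contraR xij => ijF; rewrite x_off // in_setC.
Qed.

(* For [e != 0], the largest [t] such that [c + t * e] stays in [0, 1]. *)
Definition max_step (c e : R) := if 0 < e then (1 - c) / e else c / - e.

Lemma max_step_gt0 c e : 0 < c < 1 -> e != 0 -> 0 < max_step c e.
Proof.
move=> /andP[c0 c1]; rewrite /max_step.
by case: (ltrgtP e 0) => // e_sign _; apply: divr_gt0; lra.
Qed.

Lemma add_step_unit c e t : 0 <= c <= 1 -> 0 <= t <= max_step c e -> 0 <= c + t * e <= 1.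
Proof.
rewrite /max_step => /andP[c0 c1] /andP[t0]; case: (ltrgtP e 0) => e_sign.
- by rewrite ler_pdivlMr ?oppr_gt0 // => ?; apply/andP; split; nra.
- by rewrite ler_pdivlMr // => ?; apply/andP; split; nra.
- by rewrite e_sign mulr0 addr0 => _; apply/andP.
Qed.

Lemma add_max_step01 c e : e != 0 -> c + max_step c e * e = 0 \/ c + max_step c e * e = 1.
Proof.
by move=> e0; rewrite /max_step; case: ifP => _; [right | left]; field.
Qed.

Lemma frac_step {C E} : unit_entries C -> E != 0 ->
  (forall i j, E i j != 0 -> (i, j) \in frac_cells C) ->
  exists2 eps : R, 0 < eps &
    unit_entries (C + eps *: E) /\ frac_cells (C + eps *: E) \proper frac_cells C.
Proof.
move=> C01 /matrix0Pn[i0 [j0 E0]] Efrac.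
pose step (c : 'I_m * 'I_n) := max_step (C c.1 c.2) (E c.1 c.2).
case: (@arg_minP _ R _ (i0, j0) (fun c => E c.1 c.2 != 0) step E0) => -[i1 j1] /= E1 min1.
set eps := step (i1, j1) in min1 *.
have C_frac i j : E i j != 0 -> 0 < C i j < 1 by move/Efrac; rewrite inE.
have eps_gt0 : 0 < eps by apply: max_step_gt0 (C_frac _ _ E1) E1.
have C'E i j : (C + eps *: E) i j = C i j + eps * E i j by rewrite !mxE.
exists eps => //; split.
  move=> i j; rewrite C'E; have [->|Eij] := eqVneq (E i j) 0.
    by rewrite mulr0 addr0.
  by apply: add_step_unit; [exact: C01 | rewrite (ltW eps_gt0); exact: (min1 (i, j))].
apply/properP; split.
  apply/subsetP => -[i j]; rewrite !inE /= C'E; have [->|Eij] := eqVneq (E i j) 0.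
    by rewrite mulr0 addr0.
  by move=> _; apply: C_frac.
exists (i1, j1); first exact: Efrac.
by rewrite inE /= C'E; case: (add_max_step01 (C i1 j1) _ E1) => ->; rewrite ltxx ?andbF.
Qed.

Lemma same_margins_trans {B C D} :
  same_margins B C -> same_margins C D -> same_margins B D.
Proof. by case=> rBC cBC [rCD cCD]; split=> [i|j]; rewrite ?rBC ?cBC. Qed.

Lemma round_to_01 W C : unit_entries C -> integral_margins C ->
  exists B : 'M[R]_(m, n), [/\ forall i j, B i j = 0 \/ B i j = 1, same_margins B C &
                mxdot W C <= mxdot W B].
Proof.
have [k] := ubnP #|frac_cells C|; elim: k C => // k IH C frac_lt C01 Cint.
have [frac0|frac_neq0] := eqVneq (frac_cells C) set0.
  by exists C; split=> //; exact: frac_cells0_01.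
have [E E_neq0 [E0 Efrac]] := exists_frac_direction C01 Cint frac_neq0.
wlog WE_ge0 : E E_neq0 E0 Efrac / 0 <= mxdot W E.
  move=> improve; have [|WE_lt0] := lerP 0 (mxdot W E); first exact: improve.
  apply: (improve ((-1) *: E)).
  - by rewrite scaleN1r oppr_eq0.
  - exact: zero_marginsZ.
  - by move=> i j; rewrite mxE mulN1r oppr_eq0; apply: Efrac.
  - by rewrite mxdotZ mulN1r oppr_ge0 ltW.
have [eps eps_gt0 [C'01 frac_proper]] := frac_step C01 E_neq0 Efrac.
have C'C := same_margins_addl C (zero_marginsZ eps E0).
have [|B [B01 BC' C'B]] := IH (C + eps *: E) _ C'01 (same_margins_integral C'C Cint).
  by have := proper_card frac_proper; lia.
exists B; split=> //; first exact: same_margins_trans BC' C'C.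
apply: le_trans C'B; rewrite mxdotD mxdotZ lerDl.
exact: mulr_ge0 (ltW eps_gt0) WE_ge0.
Qed.

Lemma sqr_sum_le_mxdot C : (\sum_i \sum_j C i j) ^+ 2 / (m * n)%:R <= mxdot C C.
Proof.
have [mn0|mn_gt0] := posnP (m * n).
  rewrite mn0 invr0 mulr0; apply: sumr_ge0 => i _; apply: sumr_ge0 => j _.
  by rewrite -expr2 sqr_ge0.
rewrite ler_pdivrMr ?ltr0n // mulrC.
have := sqr_sum_le_card_sum_sqr (fun c : 'I_m * 'I_n => C c.1 c.2).
rewrite card_prod !card_ord natrM -pair_bigA.
suff -> : mxdot C C = \sum_t C t.1 t.2 ^+ 2 by [].
by rewrite /mxdot pair_bigA; apply: eq_bigr => t _; rewrite expr2.
Qed.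

End Rounding.

Theorem lemma4p1 (R : realType) (n : nat) (A : 'M[R]_n) :
  (forall i j, 0 <= A i j <= 1) ->
  (forall i, exists k : nat, \sum_(j < n) A i j = k%:R) ->
  (forall j, exists k : nat, \sum_(i < n) A i j = k%:R) ->
  exists B : 'M[R]_n,
    (forall i j, B i j = 0 \/ B i j = 1) /\
    (forall i, \sum_(j < n) B i j = \sum_(j < n) A i j) /\
    (forall j, \sum_(i < n) B i j = \sum_(i < n) A i j) /\
    (\sum_(i < n) \sum_(j < n) A i j) ^+ 2 / (n%:R ^+ 2)
      <= \sum_(i < n) \sum_(j < n) A i j * B i j.
Proof.
move=> A01 A_rows A_cols.
have [B [B01 [B_rows B_cols] AB]] := round_to_01 A A A01 (conj A_rows A_cols).
exists B; do 3!split=> //.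
by apply: le_trans AB; rewrite -natrX -mulnn; exact: sqr_sum_le_mxdot.
Qed.
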